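(* Let $H$ be a monoid. Then: (a) $1s\Rightarrow 0s$, $3s\Rightarrow 0s$, $2s\Rightarrow 1s$, $2s\Rightarrow 3s$, $2s\Rightarrow 5s$, $3s\Rightarrow 6s$; (b) $1r\Rightarrow 0r$, $3r\Rightarrow 0r$, $2r\Rightarrow 1r$, $2r\Rightarrow 3r$, $2r\Rightarrow 5r$, $3r\Rightarrow 6r$, $5r\Rightarrow 4r$, $4r\Rightarrow 4'r$, $5r\Rightarrow 5'r$; (c) $kr\Rightarrow ks$ for each $k\in\{0,1,2,3,4,5,6\}$.
   Context: A monoid means a commutative cancellative monoid (written multiplicatively); $H^{\ast}$ is its unit group, $\mathbb{N}=\{1,2,\dots\}$, $\mathbb{N}_0=\{0,1,2,\dots\}$. $a\sim b$ means $a=ub$ with $u\in H^{\ast}$. Elements are relatively prime ($a\perp b$) if all their common divisors are units. $\mathrm{Sqf}\,H$: elements not of the form $b^2c$ with $b\notin H^{\ast}$. $\mathrm{Gpr}\,H$: elements $r$ such that $r\mid b^n$ ($n\in\mathbb{N}$) implies $r\mid b$. Let $S$ stand for $\mathrm{Sqf}\,H$ (conditions with suffix s) or $\mathrm{Gpr}\,H$ (suffix r). For every $a\in H$: (0) there are $n\in\mathbb{N}$, $s_1,\dots,s_n\in S$ with $a=s_1\cdots s_n$; (1) there are $n\in\mathbb{N}$, $s_1,\dots,s_n\in S$ with $s_i\perp s_j$ for $i\ne j$ and $a=s_1s_2^2s_3^3\cdots s_n^n$; (2) there are $n\in\mathbb{N}$, $s_1,\dots,s_n\in S$ with $s_i\mid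 s_{i+1}$ ($i=1,\dots,n-1$) and $a=s_1\cdots s_n$; (3) there are $n\in\mathbb{N}_0$, $s_0,\dots,s_n\in S$ with $a=s_0s_1^2s_2^{2^2}\cdots s_n^{2^n}$; (4) there are $b\in H$, $c\in S$ with $b\perp c$, $a=bc$, and some $d\in S$ with $d^2\mid b$ and $b\mid d^n$ for some $n\in\mathbb{N}$; (4') there are $b\in H$, $c\in S$ with $b\perp c$, $a=bc$, and for every $d\in S$, $d\mid b$ implies $d^2\mid b$; (5) there are $b\in H$, $c\in S$ with $a=bc$ and $a\mid c^n$ for some $n\in\mathbb{N}$; (5') there are $b\in H$, $c\in S$ with $a=bc$ and for every $d\in S$, $d\mid a$ implies $d\mid c$; (6) there are $b\in H$, $c\in S$ with $a=b^2c$. Condition $ks$ (resp. $kr$) is condition $(k)$ with $S=\mathrm{Sqf}\,H$ (resp. $S=\mathrm{Gpr}\,H$). *)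

From Stdlib Require Import Arith.

(* A monoid = commutative cancellative monoid, written multiplicatively. *)
Record CMon := {
  car :> Type;
  mul : car -> car -> car;
  one : car;
  mulA : forall a b c, mul a (mul b c) = mul (mul a b) c;
  mulC : forall a b, mul a b = mul b a;
  mul1 : forall a, mul one a = a;
  mul_cancel : forall a b c, mul a b = mul a c -> b = c
}.

Arguments mul {c0} _ _.
Arguments one {c0}.

Section Defs.
Variable H : CMon.

Fixpoint pow (x : H) (k : nat) : H :=
  match k with 0 => one | S k' => mul x (pow x k') end.

Fixpoint prodf (f : nat -> H) (n : nat) : H :=
  match n with 0 => one | S n' => mul (prodf f n') (f (S n')) end.

Definition unit (u : H) : Prop := exists v : H, mul u v = one.
Definition dvd (a b : H) : Prop := exists c : H, b = mul a c.
Definition assoc (a b : H) : Prop := exists u : H, unit u /\ a = mul u b.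
Definition coprime (a b : H) : Prop :=
  forall d : H, dvd d a -> dvd d b -> unit d.

Definition Sqf (a : H) : Prop :=
  ~ (exists b c : H, ~ unit b /\ a = mul (pow b 2) c).
Definition Gpr (r : H) : Prop :=
  forall (b : H) (n : nat), 1 <= n -> dvd r (pow b n) -> dvd r b.

Variable P : H -> Prop.

Definition cond0 : Prop := forall a : H,
  exists (n : nat) (s : nat -> H), 1 <= n /\
    (forall i, 1 <= i <= n -> P (s i)) /\ a = prodf s n.

Definition cond1 : Prop := forall a : H,
  exists (n : nat) (s : nat -> H), 1 <= n /\
    (forall i, 1 <= i <= n -> P (s i)) /\
    (forall i j, 1 <= i <= n -> 1 <= j <= n -> i <> j -> coprime (s i) (s j)) /\
    a = prodf (fun i => pow (s i) i) n.

Definition cond2 : Prop := forall a : H,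
  exists (n : nat) (s : nat -> H), 1 <= n /\
    (forall i, 1 <= i <= n -> P (s i)) /\
    (forall i, 1 <= i < n -> dvd (s i) (s (Datatypes.S i))) /\
    a = prodf s n.

Definition cond3 : Prop := forall a : H,
  exists (n : nat) (s : nat -> H),
    (forall i, 0 <= i <= n -> P (s i)) /\
    a = mul (s 0) (prodf (fun i => pow (s i) (2 ^ i)) n).

Definition cond4 : Prop := forall a : H,
  exists b c : H, P c /\ coprime b c /\ a = mul b c /\
    exists d : H, P d /\ dvd (pow d 2) b /\
      exists n : nat, 1 <= n /\ dvd b (pow d n).

Definition cond4' : Prop := forall a : H,
  exists b c : H, P c /\ coprime b c /\ a = mul b c /\
    forall d : H, P d -> dvd d b -> dvd (pow d 2) b.

Definition cond5 : Prop := forall a : H,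
  exists b c : H, P c /\ a = mul b c /\
    exists n : nat, 1 <= n /\ dvd a (pow c n).

Definition cond5' : Prop := forall a : H,
  exists b c : H, P c /\ a = mul b c /\
    forall d : H, P d -> dvd d a -> dvd d c.

Definition cond6 : Prop := forall a : H,
  exists b c : H, P c /\ a = mul (pow b 2) c.

End Defs.

(* The implications in (a) and (b) other than those involving (4), (4') and
   (5') use only that S is closed under divisors, contains 1, and that no
   non-unit square divides an element of S; Sqf H and Gpr H both qualify.
   Part (c) holds because Gpr H is contained in Sqf H and conditions (0)-(6)
   are monotone in S.

   A chain s_1 | s_2 | ... | s_n can be rewritten as
   s_1 s_2 ... s_n = t_1 t_2^2 ... t_n^n  with  t_1 t_2 ... t_n = s_n in S.
   This gives (1), since t_i t_j divides s_n for i <> j, and (5), since the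
   product divides (t_1 ... t_n)^n. It also gives (3), by halving exponents:
   t^e = t^(e mod 2) (t^(e/2))^2, where the first factors multiply to a divisor
   of s_n. *)

From Stdlib Require Import Arith Lia Classical.

Section Monoid.
Variable H : CMon.
Implicit Types x y z : H.

Lemma mulr1 x : mul x one = x.
Proof. rewrite mulC; apply mul1. Qed.

Lemma mulCA x y z : mul x (mul y z) = mul y (mul x z).
Proof. rewrite !mulA, (mulC H x); reflexivity. Qed.

Lemma mulACA x y z w : mul (mul x y) (mul z w) = mul (mul x z) (mul y w).
Proof. rewrite <- !mulA; f_equal; apply mulCA. Qed.

Lemma dvd_refl x : dvd H x x.
Proof. exists one; now rewrite mulr1. Qed.

Lemma dvd_trans x y z : dvd H x y -> dvd H y z -> dvd H x z.
Proof. intros [u ->] [v ->]; exists (mul u v); now rewrite mulA. Qed.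

Lemma dvd_mulr x y : dvd H x (mul x y).
Proof. now exists y. Qed.

Lemma dvd_mull x y : dvd H x (mul y x).
Proof. exists y; apply mulC. Qed.

Lemma dvd1 x : dvd H one x.
Proof. exists x; now rewrite mul1. Qed.

Lemma dvd_mul x y z w : dvd H x y -> dvd H z w -> dvd H (mul x z) (mul y w).
Proof. intros [u ->] [v ->]; exists (mul u v); apply mulACA. Qed.

Lemma dvd_mul2l x y z : dvd H (mul z x) (mul z y) -> dvd H x y.
Proof. intros [u Hu]; exists u; apply (mul_cancel H z); now rewrite mulA. Qed.

Lemma pow1 x : pow H x 1 = x.
Proof. apply mulr1. Qed.

Lemma pow2 x : pow H x 2 = mul x x.
Proof. simpl; now rewrite mulr1. Qed.

Lemma pow_add x m n : pow H x (m + n) = mul (pow H x m) (pow H x n).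
Proof. induction m as [|m IH]; simpl; [now rewrite mul1 | now rewrite IH, mulA]. Qed.

Lemma pow_sq x n : pow H (pow H x n) 2 = pow H x (n + n).
Proof. now rewrite pow2, pow_add. Qed.

Lemma pow_mul x y n : pow H (mul x y) n = mul (pow H x n) (pow H y n).
Proof. induction n as [|n IH]; simpl; [now rewrite mul1 | now rewrite IH, mulACA]. Qed.

Lemma dvd_pow x y n : dvd H x y -> dvd H (pow H x n) (pow H y n).
Proof. intros Hxy; induction n; simpl; [apply dvd_refl | now apply dvd_mul]. Qed.

Lemma pow_dvd_pow x m n : m <= n -> dvd H (pow H x m) (pow H x n).
Proof.
  intros Hmn; replace n with (m + (n - m)) by lia.
  rewrite pow_add; apply dvd_mulr.
Qed.

Lemma prodf_ext (f g : nat -> H) n :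
  (forall i, 1 <= i <= n -> f i = g i) -> prodf H f n = prodf H g n.
Proof.
  induction n as [|n IH]; intros E; simpl; [reflexivity|].
  rewrite IH, E; [reflexivity | lia | intros; apply E; lia].
Qed.

Lemma prodf_one n : prodf H (fun _ => one) n = one.
Proof. induction n as [|n IH]; simpl; [reflexivity | now rewrite IH, mul1]. Qed.

Lemma prodf_mul (f g : nat -> H) n :
  prodf H (fun i => mul (f i) (g i)) n = mul (prodf H f n) (prodf H g n).
Proof. induction n as [|n IH]; simpl; [now rewrite mul1 | now rewrite IH, mulACA]. Qed.

Lemma prodf_shift (f : nat -> H) n :
  prodf H f (S n) = mul (f 1) (prodf H (fun i => f (S i)) n).
Proof.
  induction n as [|n IH]; [simpl; now rewrite mul1, mulr1|].
  change (prodf H f (S (S n))) with (mul (prodf H f (S n)) (f (S (S n)))).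
  rewrite IH; simpl; apply eq_sym, mulA.
Qed.

Lemma prodf_cat (f g : nat -> H) m n :
  prodf H (fun i => if i <=? m then f i else g (i - m)) (m + n)
  = mul (prodf H f m) (prodf H g n).
Proof.
  induction n as [|n IH].
  - rewrite Nat.add_0_r, mulr1; apply prodf_ext; intros i Hi.
    destruct (Nat.leb_spec i m); [reflexivity | lia].
  - rewrite Nat.add_succ_r; cbn [prodf]; rewrite IH, <- mulA.
    destruct (Nat.leb_spec (S (m + n)) m); [lia|].
    now replace (S (m + n) - m) with (S n) by lia.
Qed.

Lemma pow_prodf (f : nat -> H) n k :
  pow H (prodf H f n) k = prodf H (fun i => pow H (f i) k) n.
Proof.
  induction n as [|n IH]; simpl; [|now rewrite pow_mul, IH].
  induction k as [|k IHk]; simpl; [reflexivity | now rewrite IHk, mul1].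
Qed.

Lemma prodf_dvd (f g : nat -> H) n :
  (forall i, 1 <= i <= n -> dvd H (f i) (g i)) -> dvd H (prodf H f n) (prodf H g n).
Proof.
  induction n as [|n IH]; intros Hfg; simpl; [apply dvd_refl|].
  apply dvd_mul; [apply IH; intros; apply Hfg | apply Hfg]; lia.
Qed.

Lemma dvd_prodf (f : nat -> H) n i : 1 <= i <= n -> dvd H (f i) (prodf H f n).
Proof.
  induction n as [|n IH]; intros Hi; simpl; [lia|].
  destruct (Nat.eq_dec i (S n)) as [->|]; [apply dvd_mull|].
  eapply dvd_trans; [apply IH; lia | apply dvd_mulr].
Qed.

Lemma dvd_mul_prodf (f : nat -> H) n i j :
  1 <= i <= n -> 1 <= j <= n -> i <> j -> dvd H (mul (f i) (f j)) (prodf H f n).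
Proof.
  induction n as [|n IH]; intros Hi Hj Hij; simpl; [lia|].
  destruct (Nat.eq_dec j (S n)) as [->|]; [|destruct (Nat.eq_dec i (S n)) as [->|]].
  - apply dvd_mul; [apply dvd_prodf; lia | apply dvd_refl].
  - rewrite mulC; apply dvd_mul; [apply dvd_prodf; lia | apply dvd_refl].
  - eapply dvd_trans; [apply IH; lia | apply dvd_mulr].
Qed.

(* Splitting off the newest quotient [s (S n) = s n * q] shifts every [t k]
   one exponent up and puts [q] in front with exponent 1. *)
Lemma chain_prodf_pow (s : nat -> H) n :
  (forall i, 1 <= i <= n -> dvd H (s i) (s (S i))) ->
  exists t : nat -> H, prodf H t (S n) = s (S n) /\
    prodf H s (S n) = prodf H (fun k => pow H (t k) k) (S n).
Proof.
  induction n as [|n IH]; intros Hchain.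
  - exists (fun _ => s 1); simpl; rewrite !mul1, mulr1; auto.
  - destruct IH as (t & Ht & Hst); [intros; apply Hchain; lia|].
    destruct (Hchain (S n)) as [q Hq]; [lia|].
    set (t' k := match k with 0 | 1 => q | S k' => t k' end).
    assert (Et : forall k, 1 <= k -> t' (S k) = t k)
      by (intros [|k] Hk; [lia | reflexivity]).
    exists t'; split.
    + rewrite prodf_shift, (prodf_ext _ t) by (intros; now apply Et).
      now rewrite Ht, Hq, mulC.
    + rewrite (prodf_shift (fun k => pow H (t' k) k)).
      rewrite (prodf_ext (fun k => pow H (t' (S k)) (S k))
                 (fun k => mul (t k) (pow H (t k) k)))
        by (intros k Hk; now rewrite Et by lia).
      change (prodf H s (S (S n))) with (mul (prodf H s (S n)) (s (S (S n)))).
      rewrite prodf_mul, <- Hst, Ht, Hq, pow1; simpl t'.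
      now rewrite mulC, (mulC H (s (S n)) q), <- mulA.
Qed.

Lemma Sqf_dvd_closed x y : dvd H x y -> Sqf H y -> Sqf H x.
Proof.
  intros [z ->] Hy (b & c & Hb & Ex); apply Hy.
  exists b, (mul c z); split; [exact Hb | now rewrite Ex, mulA].
Qed.

Lemma Sqf_sq_dvd_unit y d : Sqf H y -> dvd H (pow H d 2) y -> unit H d.
Proof. intros Hy [c Ey]; apply NNPP; intros Hd; apply Hy; now exists d, c. Qed.

Lemma Gpr_one : Gpr H one.
Proof. intros b n _ _; apply dvd1. Qed.

(* [d^2 e] divides [(d e)^2], so [Gpr] forces [d^2 e | d e]. *)
Lemma Gpr_sq_dvd_unit y d : Gpr H y -> dvd H (pow H d 2) y -> unit H d.
Proof.
  intros Hy [e ->].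
  destruct (Hy (mul d e) 2) as [z Ez]; [lia | |].
  - rewrite pow_mul; apply dvd_mul; [apply dvd_refl | rewrite pow2; apply dvd_mulr].
  - exists z; apply (mul_cancel H (mul d e)).
    rewrite mulr1; symmetry; rewrite Ez at 1.
    now rewrite pow2, mulACA, mulA.
Qed.

Lemma Gpr_dvd_closed x y : dvd H x y -> Gpr H y -> Gpr H x.
Proof.
  intros [z ->] Hy b n Hn Hx.
  apply (dvd_mul2l _ _ z); rewrite (mulC H z x).
  apply (Hy _ n Hn); rewrite pow_mul, (mulC H x).
  apply dvd_mul; [rewrite <- (pow1 z) at 1; apply pow_dvd_pow, Hn | exact Hx].
Qed.

Lemma Gpr_Sqf x : Gpr H x -> Sqf H x.
Proof.
  intros Hx (b & c & Hb & ->); apply Hb.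
  apply (Gpr_sq_dvd_unit _ _ Hx), dvd_mulr.
Qed.

Record sqf_downset (P : H -> Prop) : Prop := {
  downset_dvd : forall x y, dvd H x y -> P y -> P x;
  downset_one : P one;
  downset_sq_dvd_unit : forall y d, P y -> dvd H (pow H d 2) y -> unit H d
}.

Lemma Sqf_downset : sqf_downset (Sqf H).
Proof.
  split; [exact Sqf_dvd_closed | exact (Gpr_Sqf _ Gpr_one) | exact Sqf_sq_dvd_unit].
Qed.

Lemma Gpr_downset : sqf_downset (Gpr H).
Proof. split; [exact Gpr_dvd_closed | exact Gpr_one | exact Gpr_sq_dvd_unit]. Qed.

Section Downset.
Variable P : H -> Prop.
Hypothesis HP : sqf_downset P.

Lemma coprime_of_mul_dvd x y z : P z -> dvd H (mul x y) z -> coprime H x y.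
Proof.
  intros Pz Hxy d Hdx Hdy.
  apply (downset_sq_dvd_unit _ HP z); [exact Pz|].
  rewrite pow2; eapply dvd_trans; [apply (dvd_mul _ _ _ _ Hdx Hdy) | exact Hxy].
Qed.

Definition is_prod a :=
  exists n s, 1 <= n /\ (forall i, 1 <= i <= n -> P (s i)) /\ a = prodf H s n.

Lemma is_prod_mem x : P x -> is_prod x.
Proof. intros Px; exists 1, (fun _ => x); simpl; rewrite mul1; auto. Qed.

Lemma is_prod_one : is_prod one.
Proof. apply is_prod_mem, (downset_one _ HP). Qed.

Lemma is_prod_mul x y : is_prod x -> is_prod y -> is_prod (mul x y).
Proof.
  intros (m & s & Hm & Ps & ->) (n & t & Hn & Pt & ->).
  exists (m + n), (fun i => if i <=? m then s i else t (i - m)).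
  rewrite prodf_cat; repeat split; [lia|].
  intros i Hi; destruct (Nat.leb_spec i m); [apply Ps | apply Pt]; lia.
Qed.

Lemma is_prod_pow x k : P x -> is_prod (pow H x k).
Proof.
  intros Px; induction k as [|k IH]; [apply is_prod_one|].
  apply is_prod_mul; [apply is_prod_mem|]; assumption.
Qed.

Lemma is_prod_prodf (f : nat -> H) n :
  (forall i, 1 <= i <= n -> is_prod (f i)) -> is_prod (prodf H f n).
Proof.
  induction n as [|n IH]; intros Hf; [apply is_prod_one|].
  apply is_prod_mul; [apply IH; intros; apply Hf | apply Hf]; lia.
Qed.

Lemma cond1_cond0 : cond1 H P -> cond0 H P.
Proof.
  intros C a; destruct (C a) as (n & t & _ & Pt & _ & ->).
  apply is_prod_prodf; intros i Hi; apply is_prod_pow, Pt, Hi.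
Qed.

Lemma cond3_cond0 : cond3 H P -> cond0 H P.
Proof.
  intros C a; destruct (C a) as (n & s & Ps & ->).
  apply is_prod_mul; [apply is_prod_mem, Ps; lia|].
  apply is_prod_prodf; intros i Hi; apply is_prod_pow, Ps; lia.
Qed.

Lemma cond3_cond6 : cond3 H P -> cond6 H P.
Proof.
  intros C a; destruct (C a) as (n & s & Ps & ->).
  exists (prodf H (fun i => pow H (s i) (2 ^ (i - 1))) n), (s 0).
  split; [apply Ps; lia|].
  rewrite mulC, pow_prodf; f_equal; apply prodf_ext; intros [|i] Hi; [lia|].
  rewrite pow_sq; f_equal; simpl; rewrite Nat.sub_0_r; lia.
Qed.

Definition is_dyadic_prod a := exists n s,
  (forall i, 0 <= i <= n -> P (s i)) /\
  a = mul (s 0) (prodf H (fun i => pow H (s i) (2 ^ i)) n).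

Lemma is_dyadic_prod_one : is_dyadic_prod one.
Proof.
  exists 0, (fun _ => one); split; [intros; apply (downset_one _ HP) | simpl].
  now rewrite mulr1.
Qed.

Lemma is_dyadic_prod_mul_sq x b :
  P x -> is_dyadic_prod b -> is_dyadic_prod (mul x (pow H b 2)).
Proof.
  intros Px (n & s & Ps & ->).
  exists (S n), (fun i => match i with 0 => x | S i => s i end); split.
  - intros [|i] Hi; [exact Px | apply Ps; lia].
  - rewrite prodf_shift, pow_mul, pow_prodf; do 2 f_equal.
    apply prodf_ext; intros i Hi; rewrite pow_sq; f_equal; simpl; lia.
Qed.

Lemma is_dyadic_prodf_pow k (t : nat -> H) (e : nat -> nat) n :
  P (prodf H t n) -> (forall j, 1 <= j <= n -> e j < 2 ^ k) ->
  is_dyadic_prod (prodf H (fun j => pow H (t j) (e j)) n).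
Proof.
  revert e; induction k as [|k IH]; intros e Pt He.
  - rewrite (prodf_ext _ (fun _ => one)), prodf_one; [apply is_dyadic_prod_one|].
    intros j Hj; specialize (He j Hj); simpl in He.
    now replace (e j) with 0 by lia.
  - assert (Hsplit : prodf H (fun j => pow H (t j) (e j)) n
      = mul (prodf H (fun j => pow H (t j) (e j mod 2)) n)
            (pow H (prodf H (fun j => pow H (t j) (e j / 2)) n) 2)).
    { rewrite pow_prodf, <- prodf_mul; apply prodf_ext; intros j _.
      rewrite pow_sq, <- pow_add; f_equal.
      pose proof (Nat.div_mod_eq (e j) 2); lia. }
    rewrite Hsplit; apply is_dyadic_prod_mul_sq.
    + refine (downset_dvd _ HP _ _ (prodf_dvd _ _ n _) Pt); intros j _.
      rewrite <- (pow1 (t j)) at 2; apply pow_dvd_pow.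
      pose proof (Nat.mod_upper_bound (e j) 2); lia.
    + apply IH; [exact Pt|]; intros j Hj.
      apply Nat.Div0.div_lt_upper_bound; specialize (He j Hj); simpl in He; lia.
Qed.

Definition is_graded_prod a :=
  exists n t, 1 <= n /\ P (prodf H t n) /\ a = prodf H (fun k => pow H (t k) k) n.

Lemma cond2_is_graded_prod a : cond2 H P -> is_graded_prod a.
Proof.
  intros C; destruct (C a) as ([|n] & s & Hn & Ps & Hchain & ->); [lia|].
  destruct (chain_prodf_pow s n) as (t & Ht & Hst); [intros; apply Hchain; lia|].
  exists (S n), t; rewrite Ht; split; [lia | split; [apply Ps; lia | exact Hst]].
Qed.

Lemma cond2_cond1 : cond2 H P -> cond1 H P.
Proof.
  intros C a; destruct (cond2_is_graded_prod a C) as (n & t & Hn & Pt & ->).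
  exists n, t; repeat split; [exact Hn | |].
  - intros i Hi; exact (downset_dvd _ HP _ _ (dvd_prodf _ _ _ Hi) Pt).
  - intros i j Hi Hj Hij.
    exact (coprime_of_mul_dvd _ _ _ Pt (dvd_mul_prodf _ _ _ _ Hi Hj Hij)).
Qed.

Lemma cond2_cond3 : cond2 H P -> cond3 H P.
Proof.
  intros C a; destruct (cond2_is_graded_prod a C) as (n & t & _ & Pt & ->).
  apply (is_dyadic_prodf_pow n _ _ _ Pt); intros j Hj.
  pose proof (Nat.pow_gt_lin_r 2 n); lia.
Qed.

Lemma cond2_cond5 : cond2 H P -> cond5 H P.
Proof.
  intros C a; destruct (cond2_is_graded_prod a C) as (n & t & Hn & Pt & ->).
  exists (prodf H (fun k => pow H (t k) (k - 1)) n), (prodf H t n).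
  repeat split; [exact Pt | | exists n; split; [exact Hn|]].
  - rewrite <- prodf_mul; apply prodf_ext; intros k Hk.
    rewrite <- (pow1 (t k)) at 3; rewrite <- pow_add; f_equal; lia.
  - rewrite pow_prodf; apply prodf_dvd; intros k Hk; apply pow_dvd_pow; lia.
Qed.

End Downset.

(* Apply (5) to [a = b c] and then to [b = b' d]: [d | b | c^n] gives [d | c],
   and [a = (b d) e] with [c = d e] is the required splitting. *)
Lemma Gpr_cond5_cond4 : cond5 H (Gpr H) -> cond4 H (Gpr H).
Proof.
  intros C a.
  destruct (C a) as (b & c & Pc & -> & n & Hn & Hbc).
  destruct (C b) as (b' & d & Pd & -> & m & Hm & Hb'd).
  assert (Hdc : dvd H d c).
  { apply (Pd c n Hn); eapply dvd_trans; [|exact Hbc].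
    eapply dvd_trans; [apply dvd_mull | apply dvd_mulr]. }
  destruct Hdc as [e ->].
  assert (Pe : Gpr H e) by exact (Gpr_dvd_closed _ _ (dvd_mull e d) Pc).
  assert (Hbd : dvd H (mul (mul b' d) d) (pow H d (S m))).
  { rewrite mulC; apply dvd_mul; [apply dvd_refl | exact Hb'd]. }
  exists (mul (mul b' d) d), e; split; [exact Pe|]; split; [|split].
  - intros f Hfb Hfe.
    assert (Pf : Gpr H f) by exact (Gpr_dvd_closed _ _ Hfe Pe).
    apply (Gpr_sq_dvd_unit _ _ Pc); rewrite pow2.
    apply dvd_mul; [|exact Hfe].
    apply (Pf d (S m)); [lia | exact (dvd_trans _ _ _ Hfb Hbd)].
  - now rewrite mulA.
  - exists d; split; [exact Pd|]; split.
    + rewrite pow2, <- mulA; apply dvd_mull.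
    + exists (S m); split; [lia | exact Hbd].
Qed.

Lemma Gpr_cond4_cond4' : cond4 H (Gpr H) -> cond4' H (Gpr H).
Proof.
  intros C a.
  destruct (C a) as (b & c & Pc & Hbc & Ea & d & Pd & Hd2b & n & Hn & Hbd).
  exists b, c; repeat split; [exact Pc | exact Hbc | exact Ea|].
  intros f Pf Hfb; eapply dvd_trans; [|exact Hd2b].
  apply dvd_pow, (Pf d n Hn), (dvd_trans _ _ _ Hfb Hbd).
Qed.

Lemma Gpr_cond5_cond5' : cond5 H (Gpr H) -> cond5' H (Gpr H).
Proof.
  intros C a; destruct (C a) as (b & c & Pc & Ea & n & Hn & Hac).
  exists b, c; repeat split; [exact Pc | exact Ea|].
  intros d Pd Hda; apply (Pd c n Hn), (dvd_trans _ _ _ Hda Hac).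
Qed.

Section Monotone.
Variables P Q : H -> Prop.
Hypothesis PQ : forall x, P x -> Q x.

Lemma cond0_mono : cond0 H P -> cond0 H Q.
Proof. intros C a; destruct (C a) as (n & s & ? & ? & ?); eauto 10. Qed.

Lemma cond1_mono : cond1 H P -> cond1 H Q.
Proof. intros C a; destruct (C a) as (n & s & ? & ? & ? & ?); eauto 10. Qed.

Lemma cond2_mono : cond2 H P -> cond2 H Q.
Proof. intros C a; destruct (C a) as (n & s & ? & ? & ? & ?); eauto 10. Qed.

Lemma cond3_mono : cond3 H P -> cond3 H Q.
Proof. intros C a; destruct (C a) as (n & s & ? & ?); eauto 10. Qed.

Lemma cond4_mono : cond4 H P -> cond4 H Q.
Proof. intros C a; destruct (C a) as (b & c & ? & ? & ? & d & ? & ?); eauto 10. Qed.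

Lemma cond5_mono : cond5 H P -> cond5 H Q.
Proof. intros C a; destruct (C a) as (b & c & ? & ?); eauto 10. Qed.

Lemma cond6_mono : cond6 H P -> cond6 H Q.
Proof. intros C a; destruct (C a) as (b & c & ? & ?); eauto 10. Qed.

End Monotone.

End Monoid.

Theorem proposition4p1 (H : CMon) :
  (* (a) *)
  (cond1 H (Sqf H) -> cond0 H (Sqf H)) /\
  (cond3 H (Sqf H) -> cond0 H (Sqf H)) /\
  (cond2 H (Sqf H) -> cond1 H (Sqf H)) /\
  (cond2 H (Sqf H) -> cond3 H (Sqf H)) /\
  (cond2 H (Sqf H) -> cond5 H (Sqf H)) /\
  (cond3 H (Sqf H) -> cond6 H (Sqf H)) /\
  (* (b) *)
  (cond1 H (Gpr H) -> cond0 H (Gpr H)) /\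
  (cond3 H (Gpr H) -> cond0 H (Gpr H)) /\
  (cond2 H (Gpr H) -> cond1 H (Gpr H)) /\
  (cond2 H (Gpr H) -> cond3 H (Gpr H)) /\
  (cond2 H (Gpr H) -> cond5 H (Gpr H)) /\
  (cond3 H (Gpr H) -> cond6 H (Gpr H)) /\
  (cond5 H (Gpr H) -> cond4 H (Gpr H)) /\
  (cond4 H (Gpr H) -> cond4' H (Gpr H)) /\
  (cond5 H (Gpr H) -> cond5' H (Gpr H)) /\
  (* (c) *)
  (cond0 H (Gpr H) -> cond0 H (Sqf H)) /\
  (cond1 H (Gpr H) -> cond1 H (Sqf H)) /\
  (cond2 H (Gpr H) -> cond2 H (Sqf H)) /\
  (cond3 H (Gpr H) -> cond3 H (Sqf H)) /\
  (cond4 H (Gpr H) -> cond4 H (Sqf H)) /\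
  (cond5 H (Gpr H) -> cond5 H (Sqf H)) /\
  (cond6 H (Gpr H) -> cond6 H (Sqf H)).
Proof.
  repeat split.
  all: first
    [ apply cond1_cond0 | apply cond3_cond0 | apply cond2_cond1 | apply cond2_cond3
    | apply cond2_cond5 | apply cond3_cond6 | apply Gpr_cond5_cond4
    | apply Gpr_cond4_cond4' | apply Gpr_cond5_cond5'
    | apply cond0_mono | apply cond1_mono | apply cond2_mono | apply cond3_mono
    | apply cond4_mono | apply cond5_mono | apply cond6_mono ].
  all: first [ apply Sqf_downset | apply Gpr_downset | apply Gpr_Sqf ].
Qed.
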